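(* The (unital) $G$-graded ring $S$ is epsilon-strongly graded if and only if $S$ is nearly epsilon-strongly graded and $S_g$ is a finitely generated left $R$-module for every $g\in G$.
   Context: $G$ is a group with identity $e$; $S=\bigoplus_{g\in G}S_g$ is an associative unital ring graded by $G$ ($S_gS_h\subseteq S_{gh}$), $R=S_e$, and $XY$ denotes finite sums of products. For a ring $A$, a left $A$-module $M$ is s-unital if for each $m\in M$ there is $a\in A$ with $am=m$ (right analogously); an $(A,B)$-bimodule is s-unital if left s-unital over $A$ and right s-unital over $B$. $S$ is nearly epsilon-strongly graded if each $S_g$ is an s-unital $(S_gS_{g^{-1}},S_{g^{-1}}S_g)$-bimodule. $S$ is epsilon-strongly graded if each $S_g$ is a unital $(S_gS_{g^{-1}},S_{g^{-1}}S_g)$-bimodule, i.e. $S_gS_{g^{-1}}$ has an identity $\epsilon_g$ with $\epsilon_gs=s=s\epsilon_{g^{-1}}$ for $s\in S_g$. *)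

From HB Require Import structures.
From mathcomp Require Import all_boot all_algebra.
Set Implicit Arguments. Unset Strict Implicit. Unset Printing Implicit Defensive.
Import GRing.Theory.
Local Open Scope ring_scope.

Section Grading.
Variables (G : groupType) (S : pzRingType).

Definition additive_subgroup (A : S -> Prop) : Prop :=
  A 0 /\ (forall x y, A x -> A y -> A (x - y)).

Definition is_grading (Sg : G -> S -> Prop) : Prop :=
  [/\ (forall g, additive_subgroup (Sg g)),
      (forall g h x y, Sg g x -> Sg h y -> Sg (g * h)%g (x * y)),
      (forall s : S, exists l : seq (G * S),
          (forall p, p \in l -> Sg p.1 p.2) /\ s = \sum_(p <- l) p.2) &
      (forall l : seq (G * S), uniq (map fst l) ->
          (forall p, p \in l -> Sg p.1 p.2) ->
          \sum_(p <- l) p.2 = 0 -> forall p, p \in l -> p.2 = 0)].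

Definition prodset (X Y : S -> Prop) : S -> Prop :=
  fun z => exists l : seq (S * S),
    (forall p, p \in l -> X p.1 /\ Y p.2) /\ z = \sum_(p <- l) (p.1 * p.2).

(* nearly epsilon-strongly graded: each Sg g is an s-unital
   (Sg g Sg g^-1, Sg g^-1 Sg g)-bimodule *)
Definition nearly_epsilon_strongly_graded (Sg : G -> S -> Prop) : Prop :=
  forall g : G, forall s, Sg g s ->
    (exists a, prodset (Sg g) (Sg g^-1%g) a /\ a * s = s) /\
    (exists b, prodset (Sg g^-1%g) (Sg g) b /\ s * b = s).

Definition is_identity_of (A : S -> Prop) (e : S) : Prop :=
  A e /\ forall x, A x -> e * x = x /\ x * e = x.

(* epsilon-strongly graded: each Sg g is a unital
   (Sg g Sg g^-1, Sg g^-1 Sg g)-bimodule *)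
Definition epsilon_strongly_graded (Sg : G -> S -> Prop) : Prop :=
  forall g : G, exists e e' : S,
    [/\ is_identity_of (prodset (Sg g) (Sg g^-1%g)) e,
        is_identity_of (prodset (Sg g^-1%g) (Sg g)) e' &
        forall s, Sg g s -> e * s = s /\ s * e' = s].

Definition fin_gen_left_module (R A : S -> Prop) : Prop :=
  exists gens : seq S, (forall x, x \in gens -> A x) /\
    forall s, A s -> exists rs : seq S,
      [/\ size rs = size gens, (forall r, r \in rs -> R r) &
          s = \sum_(i < size gens) rs`_i * gens`_i].
End Grading.

From HB Require Import structures.
From mathcomp Require Import all_boot all_algebra.
Local Open Scope ring_scope.
Import GRing.Theory.
Set Implicit Arguments. Unset Strict Implicit.

(* (=>) If e' is the identity of S_{g^-1} S_g, write e' = sum_i x_i y_i with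
   x_i in S_{g^-1}, y_i in S_g; then s = s e' = sum_i (s x_i) y_i with
   s x_i in S_e, so the y_i generate S_g over S_e.

   (<=) In an s-unital module finitely many elements have a common unit
   (Tominaga's argument: correct one unit by another through the
   quasi-product a + b - b a).  Applied to generators of S_g this yields
   b in S_{g^-1} S_g acting as a right identity on all of S_g, and likewise
   c in S_g S_{g^-1} acting as a right identity on S_{g^-1}.  Such a c is
   automatically a left identity on S_g: for s in S_g, a common left unit a
   of s and of the S_g-factors of c satisfies a = a c = c.  Hence c and b
   are the identities of S_g S_{g^-1} and S_{g^-1} S_g. *)

Section ProductSets.
Variable S : pzRingType.
Implicit Types (A M X Y : S -> Prop).

Lemma additive_subgroup_add A x y :
  additive_subgroup A -> A x -> A y -> A (x + y).
Proof.
move=> [A0 AB] Ax Ay; have := AB x (0 - y) Ax (AB _ _ A0 Ay).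
by rewrite sub0r opprK.
Qed.

Lemma additive_subgroup_sum A (T : eqType) (l : seq T) (F : T -> S) :
  additive_subgroup A -> (forall p, p \in l -> A (F p)) ->
  A (\sum_(p <- l) F p).
Proof.
move=> subA; elim: l => [|p l IH] Fl; first by rewrite big_nil; case: subA.
rewrite big_cons; apply: additive_subgroup_add => //.
  by apply: Fl; exact: mem_head.
by apply: IH => q ql; apply: Fl; rewrite inE ql orbT.
Qed.

Lemma prodset0 X Y : prodset X Y 0.
Proof. by exists [::]; rewrite big_nil. Qed.

Lemma prodset_add X Y a b :
  prodset X Y a -> prodset X Y b -> prodset X Y (a + b).
Proof.
move=> [l [Hl ->]] [l' [Hl' ->]]; exists (l ++ l'); rewrite big_cat.
by split=> // p; rewrite mem_cat => /orP [] ?; [apply: Hl | apply: Hl'].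
Qed.

Lemma prodset_lmul X Y c a : (forall x, X x -> X (c * x)) ->
  prodset X Y a -> prodset X Y (c * a).
Proof.
move=> Xc [l [Hl ->]]; exists (map (fun p => (c * p.1, p.2)) l); split.
  move=> p /mapP [q ql ->] /=; have [? ?] := Hl q ql; split => //; exact: Xc.
by rewrite big_map mulr_sumr; apply: eq_bigr => p _; rewrite mulrA.
Qed.

Lemma prodset_mul X Y a b :
  (forall x y x', X x -> Y y -> X x' -> X (x * y * x')) ->
  prodset X Y a -> prodset X Y b -> prodset X Y (a * b).
Proof.
move=> XYX [l [Hl ->]] Hb; elim: l Hl => [|p l IH] Hl.
  by rewrite big_nil mul0r; apply: prodset0.
rewrite big_cons mulrDl; apply: prodset_add.
  have [? ?] := Hl p (mem_head _ _).
  by apply: prodset_lmul => // x Xx; apply: XYX.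
by apply: IH => q ql; apply: Hl; rewrite inE ql orbT.
Qed.

Lemma prodset_quasi_mul X Y a b : (forall x, X x -> X (- x)) ->
  (forall x y x', X x -> Y y -> X x' -> X (x * y * x')) ->
  prodset X Y a -> prodset X Y b -> prodset X Y (a + b - b * a).
Proof.
move=> Xopp XYX Ha Hb; apply: prodset_add; first exact: prodset_add.
rewrite -mulN1r; apply: prodset_lmul; last exact: prodset_mul.
by move=> x Xx; rewrite mulN1r; apply: Xopp.
Qed.

Lemma sum_lunit (l : seq (S * S)) c :
  (forall p, p \in l -> c * p.1 = p.1) ->
  c * \sum_(p <- l) p.1 * p.2 = \sum_(p <- l) p.1 * p.2.
Proof.
move=> Hc; rewrite mulr_sumr [RHS]big_seq big_seq.
by apply: eq_bigr => p pl; rewrite mulrA Hc.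
Qed.

Lemma sum_runit (l : seq (S * S)) c :
  (forall p, p \in l -> p.2 * c = p.2) ->
  (\sum_(p <- l) p.1 * p.2) * c = \sum_(p <- l) p.1 * p.2.
Proof.
move=> Hc; rewrite mulr_suml [RHS]big_seq big_seq.
by apply: eq_bigr => p pl; rewrite -mulrA Hc.
Qed.

Lemma prodset_identity X Y e : prodset X Y e ->
  (forall x, X x -> e * x = x) -> (forall y, Y y -> y * e = y) ->
  is_identity_of (prodset X Y) e.
Proof.
move=> XYe eX Ye; split=> // _ [l [Hl ->]]; split.
  by apply: sum_lunit => p pl; apply: eX; case: (Hl p pl).
by apply: sum_runit => p pl; apply: Ye; case: (Hl p pl).
Qed.

Lemma common_left_unit A M : A 0 ->
  (forall a b, A a -> A b -> A (a + b - b * a)) ->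
  (forall m, M m -> exists a, A a /\ a * m = m) ->
  (forall m a, M m -> A a -> M (m - a * m)) ->
  forall l : seq S, (forall m, m \in l -> M m) ->
  exists a, A a /\ forall m, m \in l -> a * m = m.
Proof.
move=> A0 Aquasi Munit Mcorr; elim=> [|m l IH] Ml; first by exists 0.
have [a' [Aa' a'l]] := IH (fun x xl => Ml x (mem_behead (s := m :: l) xl)).
have [a1 [Aa1 a1m]] := Munit _ (Mcorr m a' (Ml m (mem_head _ _)) Aa').
exists (a' + a1 - a1 * a'); split; first exact: Aquasi.
move=> x /predU1P [->|xl]; rewrite mulrBl mulrDl -mulrA.
  by rewrite -addrA -mulrBr a1m addrC subrK.
by rewrite a'l // addrK.
Qed.

End ProductSets.

Lemma common_right_unit (S : pzRingType) (A M : S -> Prop) : A 0 ->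
  (forall a b, A a -> A b -> A (a + b - a * b)) ->
  (forall m, M m -> exists a, A a /\ m * a = m) ->
  (forall m a, M m -> A a -> M (m - m * a)) ->
  forall l : seq S, (forall m, m \in l -> M m) ->
  exists a, A a /\ forall m, m \in l -> m * a = m.
Proof. exact: (@common_left_unit S^c A M). Qed.

Section GradedRing.
Variables (G : groupType) (S : pzRingType) (Sg : G -> S -> Prop).
Hypothesis grading : is_grading Sg.

Lemma graded_subgroup g : additive_subgroup (Sg g).
Proof. by case: grading. Qed.

Lemma graded_mul g h x y : Sg g x -> Sg h y -> Sg (g * h)%g (x * y).
Proof. by case: grading => _ Hmul _ _; apply: Hmul. Qed.

Lemma graded_opp g x : Sg g x -> Sg g (- x).
Proof. by case: (graded_subgroup g) => S0 SB Sx; rewrite -sub0r; apply: SB. Qed.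

Lemma graded_sandwich g x y x' :
  Sg g x -> Sg g^-1%g y -> Sg g x' -> Sg g (x * y * x').
Proof.
move=> Sx Sy Sx'; have := graded_mul (graded_mul Sx Sy) Sx'.
by rewrite mulgV mul1g.
Qed.

Lemma left_units_quasi_mul g a b :
  prodset (Sg g) (Sg g^-1%g) a -> prodset (Sg g) (Sg g^-1%g) b ->
  prodset (Sg g) (Sg g^-1%g) (a + b - b * a).
Proof.
by apply: prodset_quasi_mul; [exact: graded_opp | exact: graded_sandwich].
Qed.

Lemma right_units_quasi_mul g a b :
  prodset (Sg g^-1%g) (Sg g) a -> prodset (Sg g^-1%g) (Sg g) b ->
  prodset (Sg g^-1%g) (Sg g) (a + b - a * b).
Proof.
move=> Ja Jb; rewrite (addrC a); apply: prodset_quasi_mul => //.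
  exact: graded_opp.
by move=> x y x'; have := @graded_sandwich g^-1%g x y x'; rewrite invgK.
Qed.

Lemma graded_lcorrection g m a :
  Sg g m -> prodset (Sg g) (Sg g^-1%g) a -> Sg g (m - a * m).
Proof.
move=> Sm [l [Hl ->]]; case: (graded_subgroup g) => _ SB; apply: SB => //.
rewrite mulr_suml; apply: additive_subgroup_sum; first exact: graded_subgroup.
by move=> p pl; have [? ?] := Hl p pl; apply: graded_sandwich.
Qed.

Lemma graded_rcorrection g m a :
  Sg g m -> prodset (Sg g^-1%g) (Sg g) a -> Sg g (m - m * a).
Proof.
move=> Sm [l [Hl ->]]; case: (graded_subgroup g) => _ SB; apply: SB => //.
rewrite mulr_sumr; apply: additive_subgroup_sum; first exact: graded_subgroup.
by move=> p pl; have [? ?] := Hl p pl; rewrite mulrA; apply: graded_sandwich.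
Qed.

(* A right identity e' of S_g lying in S_{g^-1} S_g exhibits S_g as a
   finitely generated S_e-module: the S_g-factors of e' generate it. *)
Lemma right_unit_fin_gen g e' : prodset (Sg g^-1%g) (Sg g) e' ->
  (forall s, Sg g s -> s * e' = s) -> fin_gen_left_module (Sg 1%g) (Sg g).
Proof.
move=> [l [Hl e'E]] e'unit; exists (map snd l); split.
  by move=> x /mapP [p pl ->]; case: (Hl p pl).
move=> s Ss; exists (map (fun p => s * p.1) l); split.
- by rewrite !size_map.
- move=> r /mapP [p pl ->]; have [Sp1 _] := Hl p pl.
  by have := graded_mul Ss Sp1; rewrite mulgV.
- rewrite -{1}(e'unit s Ss) e'E mulr_sumr (big_nth (0, 0)) big_mkord size_map.
  by apply: eq_bigr => i _; rewrite !(nth_map (0, 0)) // mulrA.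
Qed.

Hypothesis nearly : nearly_epsilon_strongly_graded Sg.

Lemma fin_gen_right_unit g : fin_gen_left_module (Sg 1%g) (Sg g) ->
  exists b, prodset (Sg g^-1%g) (Sg g) b /\ forall s, Sg g s -> s * b = s.
Proof.
move=> [gens [Sgens spans]].
have [b [Jb bgens]] := common_right_unit (prodset0 _ _)
  (@right_units_quasi_mul g) (fun m Sm => proj2 (nearly Sm))
  (@graded_rcorrection g) Sgens.
exists b; split => // s /spans [rs [_ _ ->]].
by rewrite mulr_suml; apply: eq_bigr => i _; rewrite -mulrA bgens // mem_nth.
Qed.

Lemma right_unit_left_unit g c : prodset (Sg g) (Sg g^-1%g) c ->
  (forall y, Sg g^-1%g y -> y * c = y) -> forall s, Sg g s -> c * s = s.
Proof.
move=> Ic cunit s Ss; case: (Ic) => [l [Hl cE]].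
have Sfactors : forall m, m \in s :: map fst l -> Sg g m.
  move=> m /predU1P [-> //|/mapP [p pl ->]]; by case: (Hl p pl).
have [a [Ia aunit]] := common_left_unit (prodset0 _ _)
  (@left_units_quasi_mul g) (fun m Sm => proj1 (nearly Sm))
  (@graded_lcorrection g) Sfactors.
have ac_c : a * c = c.
  by rewrite cE sum_lunit // => p pl; apply: aunit; rewrite inE map_f ?orbT.
have ac_a : a * c = a.
  case: Ia => [la [Hla ->]]; apply: sum_runit => p pl.
  by apply: cunit; case: (Hla p pl).
by rewrite -ac_c ac_a aunit ?mem_head.
Qed.

Lemma fin_gen_epsilon_component g :
  fin_gen_left_module (Sg 1%g) (Sg g) ->
  fin_gen_left_module (Sg 1%g) (Sg g^-1%g) ->
  exists e e' : S,
    [/\ is_identity_of (prodset (Sg g) (Sg g^-1%g)) e,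
        is_identity_of (prodset (Sg g^-1%g) (Sg g)) e' &
        forall s, Sg g s -> e * s = s /\ s * e' = s].
Proof.
move=> /fin_gen_right_unit [b [Jb bunit]] /fin_gen_right_unit.
rewrite invgK => -[c [Ic cunit]].
have cleft := right_unit_left_unit Ic cunit.
have bleft : forall y, Sg g^-1%g y -> b * y = y.
  by apply: right_unit_left_unit; rewrite invgK.
exists c, b; split.
- exact: prodset_identity.
- exact: prodset_identity.
- by move=> s Ss; rewrite cleft ?bunit.
Qed.

End GradedRing.

Theorem mainTheorem5 (G : groupType) (S : pzRingType) (Sg : G -> S -> Prop) :
  is_grading Sg ->
  (epsilon_strongly_graded Sg <->
   (nearly_epsilon_strongly_graded Sg /\
    forall g : G, fin_gen_left_module (Sg 1%g) (Sg g))).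
Proof.
move=> grading; split=> [eps | [nearly fin_gen] g].
  split=> [g s Ss | g]; have [e [e' [[Ie _] [Je' _] unit]]] := eps g.
    by have [es se'] := unit s Ss; split; [exists e | exists e'].
  by apply: (right_unit_fin_gen grading Je') => s /unit [].
exact: fin_gen_epsilon_component.
Qed.
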